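(* Let $D$ be a strong nonseparable digraph, let $H$ be a strong nonseparable subdigraph of $D$, and let $P=(x_0,x_1,\ldots,x_{r-1},x_r)$ be an ear of $H$ in $D$ with length $l(P)=r\geq 2$. If $H$ has no kernel and $H'=H\cup P$ has a kernel $N'$, then one of the following holds: (1) $x_0\notin N'$, $x_r\in N'$ and $l(P)$ is odd; (2) $x_0,x_r\notin N'$ and $l(P)$ is even.
   Context: All digraphs are finite, without loops or multiple arcs. Paths and cycles are directed; the length of a path is its number of arcs. A digraph is strong if for every ordered pair of vertices $x,y$ there is a directed path from $x$ to $y$; it is nonseparable if its underlying undirected graph is nonseparable (has no cut vertex). For a subdigraph $H$ of $D$, an ear of $H$ in $D$ is a directed path $(x_0,\ldots,x_r)$ in $D$ whose end vertices $x_0,x_r$ lie in $H$ and whose internal vertices $x_1,\ldots,x_{r-1}$ do not lie in $H$ (or a directed cycle with exactly one vertex $x_0=x_r$ in $H$). A kernel of a digraph is a set $N$ of vertices that is independent (no arc between two of its vertices) and absorbent (every vertex not in $N$ has an out-neighbour in $N$). *)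

From mathcomp Require Import all_boot.
Set Implicit Arguments. Unset Strict Implicit. Unset Printing Implicit Defensive.

(* A digraph is a loopless arc relation [e : rel T] on a finite vertex type T.
   A (sub)digraph is represented by a vertex set [V : {set T}] and an arc
   relation [A : rel T] whose arcs join vertices of V. *)

Definition arcs_in (T : finType) (V : {set T}) (A : rel T) : rel T :=
  [rel x y | [&& x \in V, y \in V & A x y]].

Definition subdigraph (T : finType) (e : rel T) (VH : {set T}) (AH : rel T) :=
  forall x y, AH x y -> [&& x \in VH, y \in VH & e x y].

Definition strong (T : finType) (V : {set T}) (A : rel T) :=
  forall x y, x \in V -> y \in V -> connect (arcs_in V A) x y.

Definition und_connected (T : finType) (W : {set T}) (A : rel T) :=
  forall x y, x \in W -> y \in W ->
    connect [rel a b | [&& a \in W, b \in W & A a b || A b a]] x y.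

Definition nonseparable (T : finType) (V : {set T}) (A : rel T) :=
  und_connected V A /\ forall v, v \in V -> und_connected (V :\ v) A.

Definition kernel (T : finType) (V : {set T}) (A : rel T) (N : {set T}) :=
  [/\ N \subset V,
      (forall x y, x \in N -> y \in N -> ~~ A x y) &
      (forall x, x \in V -> x \notin N -> exists2 y, y \in N & A x y)].

(* (x 0, ..., x r) is an ear of H = (VH, AH) in D = (T, e): a directed path
   of D (or a directed cycle when x 0 = x r) whose end vertices lie in H and
   whose internal vertices do not lie in H *)
Definition ear (T : finType) (e : rel T) (VH : {set T}) (x : nat -> T) (r : nat) :=
  [/\ (forall i, i < r -> e (x i) (x i.+1)),
      (forall i j, i < j <= r -> x i = x j -> i = 0 /\ j = r),
      x 0 \in VH, x r \in VH &
      (forall i, 0 < i < r -> x i \notin VH)].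

Definition union_V (T : finType) (VH : {set T}) (x : nat -> T) (r : nat) : {set T} :=
  VH :|: [set x (nat_of_ord i) | i : 'I_r.+1].
Definition union_A (T : finType) (AH : rel T) (x : nat -> T) (r : nat) : rel T :=
  [rel a b | AH a b || [exists i : 'I_r, (a == x i) && (b == x i.+1)]].

From mathcomp Require Import all_boot.

(* The only arcs of H ∪ P that H lacks are those of the ear. If x_0 ∈ N' or
   x_1 ∉ N', no vertex of H relies on the arc x_0 x_1 to be absorbed, so
   N' ∩ V(H) would be a kernel of H; hence x_0 ∉ N' and x_1 ∈ N'. Every
   interior vertex x_i has x_(i+1) as its unique out-neighbour in H ∪ P, so
   membership in N' alternates along the ear: x_i ∈ N' iff i is odd. *)

Set Implicit Arguments.
Unset Strict Implicit.
Unset Printing Implicit Defensive.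

Section Kernel.
Variables (T : finType) (V : {set T}) (A : rel T) (N : {set T}).
Hypothesis kerN : kernel V A N.

Lemma kernel_unique_out (v w : T) :
  v \in V -> A v w -> (forall z, A v z -> z = w) -> (v \in N) = (w \notin N).
Proof.
case: kerN => _ indN absN vV vw outw.
have [vN | vN] := boolP (v \in N).
  by apply/esym/negP => wN; move: (indN _ _ vN wN); rewrite vw.
by have [z zN /outw <-] := absN v vV vN; rewrite zN.
Qed.

Lemma kernel_restrict (W : {set T}) (B : rel T) :
  W \subset V -> subrel B A ->
  (forall v y, v \in W -> v \notin N -> y \in N -> A v y -> B v y && (y \in W)) ->
  kernel W B (N :&: W).
Proof.
case: kerN => _ indN absN sWV sBA arcsWN; split.
- exact: subsetIr.
- move=> a b /setIP[aN _] /setIP[bN _]; apply/negP => /sBA.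
  exact/negP/indN.
- move=> v vW; rewrite inE vW andbT => vN.
  have [y yN vy] := absN v (subsetP sWV v vW) vN.
  have /andP[Bvy yW] := arcsWN v y vW vN yN vy.
  by exists y; rewrite ?inE ?yN.
Qed.

End Kernel.

Lemma alternating_odd (b : nat -> bool) (r : nat) :
  b 1 -> (forall i, 0 < i < r -> b i.+1 = ~~ b i) ->
  forall i, 0 < i <= r -> b i = odd i.
Proof.
move=> b1 bS; elim=> [// | [_ _ | i IH /andP[_ ir]]]; first by rewrite b1.
by rewrite bS // IH ?(ltnW ir).
Qed.

Section Ear.
Variables (T : finType) (e : rel T) (VH : {set T}) (AH : rel T).
Variables (x : nat -> T) (r : nat).
Hypothesis subH : subdigraph e VH AH.
Hypothesis earP : ear e VH x r.

Lemma union_V_ear i : i <= r -> x i \in union_V VH x r.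
Proof.
by move=> ir; apply/setUP; right; apply/imsetP; exists (Ordinal (ir : i < r.+1)).
Qed.

Lemma union_A_ear i : i < r -> union_A AH x r (x i) (x i.+1).
Proof.
by move=> ir; apply/orP; right; apply/existsP; exists (Ordinal ir); rewrite /= !eqxx.
Qed.

Lemma subrel_union_A : subrel AH (union_A AH x r).
Proof. by move=> a b ab; apply/orP; left. Qed.

Lemma ear_interior_inj i j : 0 < i < r -> j <= r -> x i = x j -> i = j.
Proof.
case: earP => _ injx _ _ _ /andP[i0 ir] jr xij.
case: (ltngtP i j) => // [ij | ji].
- have /injx/(_ xij)[i_0 _] : i < j <= r by rewrite ij.
  by rewrite i_0 in i0.
- have /injx/(_ (esym xij))[_ i_r] : j < i <= r by rewrite ji ltnW.
  by rewrite i_r ltnn in ir.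
Qed.

Lemma union_A_interior i z :
  0 < i < r -> union_A AH x r (x i) z = (z == x i.+1).
Proof.
case: earP => _ _ _ _ xint ir; apply/idP/eqP => [|->]; last first.
  by apply: union_A_ear; case/andP: ir.
case/orP => [/subH/and3P[xiV _ _] | /existsP[[j jr] /andP[/eqP xij /eqP ->]]].
  by move: xiV; rewrite (negbTE (xint i ir)).
by rewrite (ear_interior_inj ir (ltnW jr) xij).
Qed.

Lemma union_A_from_VH v y :
  v \in VH -> union_A AH x r v y -> AH v y || (v == x 0) && (y == x 1).
Proof.
case: earP => _ _ _ _ xint vV.
case/orP => [-> // | /existsP[[[|j] jr] /andP[/eqP vj /eqP ->]]].
  by rewrite /= vj !eqxx orbT.
by move: vV; rewrite vj (negbTE (xint j.+1 jr)).
Qed.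

Section UnionKernel.
Variable N : {set T}.
Hypothesis noKH : ~ (exists N, kernel VH AH N).
Hypothesis kerN : kernel (union_V VH x r) (union_A AH x r) N.

Lemma kernel_union_ear_start : x 0 \notin N /\ x 1 \in N.
Proof.
apply/andP/negPn/negP => not_start; apply: noKH; exists (N :&: VH).
apply: (kernel_restrict kerN) => [|| v y vV vN yN vy].
- exact: subsetUl.
- exact: subrel_union_A.
have /orP[AHvy | /andP[/eqP v0 /eqP y1]] := union_A_from_VH vV vy.
  by have /and3P[_ -> _] := subH AHvy; rewrite AHvy.
by case/negP: not_start; rewrite -v0 -y1 vN.
Qed.

Lemma kernel_union_ear_odd i : 0 < i <= r -> (x i \in N) = odd i.
Proof.
have [_ x1N] := kernel_union_ear_start.
apply: (alternating_odd (b := fun i => x i \in N)) => // j jr.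
have /andP[_ jlt] := jr.
rewrite (kernel_unique_out kerN (union_V_ear (ltnW jlt)) (union_A_ear jlt)) ?negbK //.
by move=> z; rewrite union_A_interior // => /eqP.
Qed.

End UnionKernel.

End Ear.

Theorem mainTheorem5 (T : finType) (e : rel T) (VH : {set T}) (AH : rel T)
    (x : nat -> T) (r : nat) (N' : {set T}) :
  irreflexive e ->
  strong [set: T] e -> nonseparable [set: T] e ->
  subdigraph e VH AH -> strong VH AH -> nonseparable VH AH ->
  ear e VH x r -> 2 <= r ->
  ~ (exists N, kernel VH AH N) ->
  kernel (union_V VH x r) (union_A AH x r) N' ->
  (x 0 \notin N' /\ x r \in N' /\ odd r) \/
  (x 0 \notin N' /\ x r \notin N' /\ ~~ odd r).
Proof.
move=> _ _ _ subH _ _ earP r2 noKH kerN'.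
have [x0N' _] := kernel_union_ear_start subH earP noKH kerN'.
have xrN' : (x r \in N') = odd r.
  by apply: (kernel_union_ear_odd subH earP noKH kerN'); rewrite leqnn andbT ltnW.
by case: (boolP (odd r)) => oddr; [left | right]; rewrite xrN' oddr.
Qed.
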